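(* For $i=1,2$ let $G_i$ be a group acting by homeomorphisms on a space $X_i$. If a space $\mathfrak{B}$, together with a left action of $G_1$ and a right action of $G_2$ over maps $P_i:\mathfrak{B}\to X_i$, is an equivalence between the action groupoids $G_1\ltimes X_1$ and $G_2\ltimes X_2$, then $P_1:\mathfrak{B}\to X_1$ and $P_2:\mathfrak{B}\to X_2$ are covering maps.
   Context: All spaces are locally compact and metrizable. The action groupoid $G\ltimes X$ consists of pairs $(g,x)$ with origin $x$, target $g(x)$ and product $(g,h(x))(h,x)=(gh,x)$. A $(\mathfrak{G},\mathfrak{H})$-equivalence between groupoids is a locally compact Hausdorff space $\mathfrak{B}$ with a free proper left action of $\mathfrak{G}$ over an open map $P_1:\mathfrak{B}\to\mathfrak{G}^{(0)}$ and a free proper right action of $\mathfrak{H}$ over an open map $P_2:\mathfrak{B}\to\mathfrak{H}^{(0)}$ (an action over $P$ is a continuous partially defined action $x\cdot h$, defined when $P(x)=\mathsf{t}(h)$, with $P(x\cdot h)=\mathsf{o}(h)$ and associativity; free means $x\cdot h=x$ forces $h$ to be a unit; proper means $(x,h)\mapsto(x,x\cdot h)$ is proper) such that the two actions commute and $P_1$, $P_2$ induce bijections $\mathfrak{B}/\mathfrak{H}\to\mathfrak{G}^{(0)}$ and $\mathfrak{G}\backslash\mathfrak{B}\to\mathfrak{H}^{(0)}$. Via $g\cdot x=(g,P_1(x))\cdot x$ and $x\cdot h=x\cdot(h^{-1},\ldots)$ such an equivalence yields commuting free proper actions of the groups $G_1$, $G_2$ on $\mathfrak{B}$. *)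

From HB Require Import structures.
From mathcomp Require Import all_boot all_order all_algebra.
From mathcomp Require Import all_classical all_reals all_analysis.

Set Implicit Arguments.
Unset Strict Implicit.
Unset Printing Implicit Defensive.

Import Order.TTheory GRing.Theory Num.Theory.
Local Open Scope classical_set_scope.

Definition is_group {G : Type} (mul : G -> G -> G) (one : G) (inv : G -> G) :=
  [/\ (forall a b c, mul a (mul b c) = mul (mul a b) c),
      (forall a, mul one a = a), (forall a, mul a one = a),
      (forall a, mul (inv a) a = one) & (forall a, mul a (inv a) = one)].

Definition action_by_homeos {G : Type} {X : topologicalType}
  (mul : G -> G -> G) (one : G) (act : G -> X -> X) :=
  [/\ (forall x, act one x = x),
      (forall g h x, act (mul g h) x = act g (act h x)) &
      (forall g, continuous (act g))].

Definition open_map {E X : topologicalType} (f : E -> X) :=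
  forall A : set E, open A -> open (f @` A).

Definition covering_map {E X : topologicalType} (p : E -> X) :=
  [/\ continuous p, (forall x, exists e, p e = x) &
   forall x : X, exists U : set X, [/\ open U, U x &
     exists (I : Type) (V : I -> set E),
       [/\ (forall i, open (V i)),
           (forall i j, i <> j -> V i `&` V j = set0),
           p @^-1` U = \bigcup_i V i &
           forall i, [/\ (forall a b, V i a -> V i b -> p a = p b -> a = b),
                         p @` V i = U &
                         (forall W : set E, open W -> open (p @` (W `&` V i)))]]]].

(* Left action of the action groupoid G |x X (G discrete, arrows (g,x) with
   origin x and target g x) on B over P.  Since an arrow with origin P b is
   determined by its group component, the partial action is encoded by
   L g b := (g, P b) . b; the fibred product G|xX *_{o,P} B is homeomorphic
   to G * B via ((g, P b), b) <-> (g, b). *)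
Definition groupoid_left_action {G : discreteTopologicalType}
  {X B : topologicalType} (mul : G -> G -> G) (one : G) (act : G -> X -> X)
  (P : B -> X) (L : G -> B -> B) :=
  [/\ (forall g, continuous (L g)),
      (forall g b, P (L g b) = act g (P b)),
      (forall g h b, L g (L h b) = L (mul g h) b) &
      (forall b, L one b = b)].

Definition groupoid_left_action_free {G : Type} {B : Type} (one : G)
  (L : G -> B -> B) := forall g b, L g b = b -> g = one.

Definition groupoid_left_action_proper {G : discreteTopologicalType}
  {B : topologicalType} (L : G -> B -> B) :=
  forall K : set (B * B), compact K ->
    compact [set gb : G * B | K (L gb.1 gb.2, gb.2)].

(* Right action of the action groupoid G |x X on B over P.  An arrow h with
   target P b is h = (k, act (inv k) (P b)); the partial action is encoded by
   R b k := b . (k, act (inv k) (P b)). *)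
Definition groupoid_right_action {G : discreteTopologicalType}
  {X B : topologicalType} (mul : G -> G -> G) (one : G) (inv : G -> G)
  (act : G -> X -> X) (P : B -> X) (R : B -> G -> B) :=
  [/\ (forall k, continuous (fun b => R b k)),
      (forall b k, P (R b k) = act (inv k) (P b)),
      (forall b k k', R (R b k) k' = R b (mul k k')) &
      (forall b, R b one = b)].

Definition groupoid_right_action_free {G : Type} {B : Type} (one : G)
  (R : B -> G -> B) := forall b k, R b k = b -> k = one.

Definition groupoid_right_action_proper {G : discreteTopologicalType}
  {B : topologicalType} (R : B -> G -> B) :=
  forall K : set (B * B), compact K ->
    compact [set bk : B * G | K (bk.1, R bk.1 bk.2)].

Definition action_groupoid_equivalence
  {G1 G2 : discreteTopologicalType} {X1 X2 B : topologicalType}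
  (mul1 : G1 -> G1 -> G1) (one1 : G1) (act1 : G1 -> X1 -> X1)
  (mul2 : G2 -> G2 -> G2) (one2 : G2) (inv2 : G2 -> G2)
  (act2 : G2 -> X2 -> X2)
  (P1 : B -> X1) (P2 : B -> X2) (L : G1 -> B -> B) (R : B -> G2 -> B) :=
  [/\ [/\ continuous P1, open_map P1, continuous P2 & open_map P2],
      [/\ groupoid_left_action mul1 one1 act1 P1 L,
          groupoid_left_action_free one1 L &
          groupoid_left_action_proper L],
      [/\ groupoid_right_action mul2 one2 inv2 act2 P2 R,
          groupoid_right_action_free one2 R &
          groupoid_right_action_proper R],
      [/\ (forall g b k, L g (R b k) = R (L g b) k),
          (forall g b, P2 (L g b) = P2 b) &
          (forall b k, P1 (R b k) = P1 b)] &
      (* P1, P2 induce bijections B/H -> X1 and G\B -> X2 *)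
      [/\ (forall x, exists b, P1 b = x),
          (forall b b', P1 b = P1 b' -> exists k, b' = R b k),
          (forall y, exists b, P2 b = y) &
          (forall b b', P2 b = P2 b' -> exists g, b' = L g b)]].

From HB Require Import structures.
From mathcomp Require Import all_boot all_order all_algebra.
From mathcomp Require Import all_classical all_reals all_analysis.
Set Implicit Arguments.
Unset Strict Implicit.
Local Open Scope classical_set_scope.

(* For a free action of a discrete group by homeomorphisms on a locally
   compact Hausdorff space, properness says that the group elements bringing a
   compact neighbourhood back into itself form a compact (finite) set;
   separating each nontrivial such element from the identity shrinks the
   neighbourhood to a wandering one, with V . k disjoint from V for k <> 1.
   Over an equivalence, P1 is the orbit map of the free proper right action of
   G2 (and P2 that of G1), so the translates of a wandering neighbourhood are
   the sheets over its open image. *)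

Section FreeProperAction.
Variables (G : discreteTopologicalType) (B : topologicalType).
Variables (one : G) (A : B -> G -> B).

Definition return_set (C : set B) := [set k | exists b, C b /\ C (A b k)].

Definition wandering (V : set B) :=
  forall x k, V x -> V (A x k) -> k = one.

Hypothesis hausB : hausdorff_space B.
Hypothesis contA : forall k, continuous (A^~ k).
Hypothesis freeA : forall b k, A b k = b -> k = one.

Lemma trivial_or_moved_near (b : B) (k : G) :
  \forall k' \near k & p \near filter_prod (nbhs b) (nbhs b),
    k' = one \/ A p.1 k' <> p.2.
Proof.
have [->|k_neq1] := pselect (k = one).
  exists ([set one], setT); first by split; [exact: discrete_set1|exact: filterT].
  by move=> [k' p] /= [-> _]; left.
have Abk_neq_b : A b k != b by apply/eqP => /freeA.
have := hausB; rewrite open_hausdorff => /(_ _ _ Abk_neq_b).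
move=> [[U W] /= [Ub Wb] [oU oW /eqP UW0]].
rewrite inE in Ub; rewrite inE in Wb.
exists ([set k], (A^~ k @^-1` U) `*` W).
  split; first exact: discrete_set1.
  exists (A^~ k @^-1` U, W) => //; split; last exact: open_nbhs_nbhs.
  by apply: contA; exact: open_nbhs_nbhs.
move=> [k' [x x']] /= [-> [Ux Wx']]; right => /= Axk.
suff : (U `&` W) x' by rewrite UW0.
by split => //; rewrite -Axk.
Qed.

Hypothesis loccompB : locally_compact [set: B].
Hypothesis properA : forall C, compact C -> compact (return_set C).

Lemma wandering_nbhs b : exists V, [/\ open V, V b & wandering V].
Proof.
have [C nC [cC _]] := loccompB (I : [set: B] b); rewrite withinET in nC.
have [[V1 V2] /= [nV1 nV2] V12] := iffLR (compact_near_coveringP _) (properA cC)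
  (B * B)%type _ (fun p k => k = one \/ A p.1 k <> p.2) _
  (fun k _ => trivial_or_moved_near b k).
exists (interior (C `&` V1 `&` V2)); split; first exact: open_interior.
  by apply: filterI => //; apply: filterI.
move=> x k /interior_subset[[Cx V1x] V2x] /interior_subset[[CAxk V1Axk] V2Axk].
have Ck : return_set C k by exists x.
by case: (V12 (x, A x k) (conj V1x V2Axk) k Ck).
Qed.

End FreeProperAction.

Section OrbitProjection.
Variables (G : discreteTopologicalType) (B X : topologicalType).
Variables (mul : G -> G -> G) (one : G) (inv : G -> G).
Variables (A : B -> G -> B) (P : B -> X).

Hypothesis groupG : is_group mul one inv.
Hypothesis A_mul : forall b k k', A (A b k) k' = A b (mul k k').
Hypothesis A_one : forall b, A b one = b.
Hypothesis contA : forall k, continuous (A^~ k).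
Hypothesis P_invariant : forall b k, P (A b k) = P b.
Hypothesis P_fibre_orbit : forall b b', P b = P b' -> exists k, b' = A b k.

Lemma mul_invr_eq1 a c : mul a (inv c) = one -> a = c.
Proof.
have [mulA mul1g mulg1 mulVg _] := groupG.
by move=> /(congr1 (mul^~ c)); rewrite -mulA mulVg mulg1 mul1g.
Qed.

Lemma mul_idr a k : mul a k = a -> k = one.
Proof.
have [mulA mul1g _ mulVg _] := groupG.
by move=> /(congr1 (mul (inv a))); rewrite mulA mulVg mul1g.
Qed.

Lemma A_invK y k : A (A y k) (inv k) = y.
Proof. by have [_ _ _ _ mulgV] := groupG; rewrite A_mul mulgV A_one. Qed.

Definition sheet (V : set B) (k : G) := [set y | V (A y (inv k))].

Lemma open_sheet V k : open V -> open (sheet V k).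
Proof. by move=> oV; apply: open_comp => // y _; exact: contA. Qed.

Lemma preimage_image_bigcup_sheets V :
  P @^-1` (P @` V) = \bigcup_k sheet V k.
Proof.
apply/seteqP; split => y.
  by move=> [v Vv /P_fibre_orbit[k ->]]; exists k => //; rewrite /sheet /= A_invK.
by move=> [k _ /= Vk]; exists (A y (inv k)).
Qed.

Lemma image_sheet V k : P @` sheet V k = P @` V.
Proof.
apply/seteqP; split => y.
  by move=> [a /= Va <-]; exists (A a (inv k)).
by move=> [v Vv <-]; exists (A v k) => //; rewrite /sheet /= A_invK.
Qed.

Section WanderingSheets.
Variable V : set B.
Hypothesis wanderV : wandering one A V.

Lemma sheets_disjoint i j : i <> j -> sheet V i `&` sheet V j = set0.
Proof.
have [mulA mul1g _ mulVg _] := groupG.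
move=> ij; apply/seteqP; split => // y [/= Vi Vj]; apply: ij.
apply: mul_invr_eq1; apply: wanderV Vi _.
by rewrite A_mul mulA mulVg mul1g.
Qed.

Lemma sheet_injective i a a' :
  sheet V i a -> sheet V i a' -> P a = P a' -> a = a'.
Proof.
have [mulA mul1g _ mulVg _] := groupG.
move=> /= Va Va' /P_fibre_orbit[k a'E]; rewrite {}a'E /= in Va' *.
suff -> : k = one by rewrite A_one.
apply: (mul_idr (a := i)); apply: mul_invr_eq1; rewrite -mulA.
apply: wanderV Va _.
by rewrite !A_mul !mulA mulVg mul1g -A_mul.
Qed.

End WanderingSheets.

Hypothesis hausB : hausdorff_space B.
Hypothesis loccompB : locally_compact [set: B].
Hypothesis freeA : forall b k, A b k = b -> k = one.
Hypothesis properA : forall C, compact C -> compact (return_set A C).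

Lemma orbit_projection_covering :
  continuous P -> open_map P -> (forall x, exists b, P b = x) -> covering_map P.
Proof.
move=> contP openP surjP; split => // x; have [b <-] := surjP x.
have [V [oV Vb wV]] := wandering_nbhs hausB contA freeA loccompB properA b.
exists (P @` V); split; [exact: openP | by exists b |].
exists G, (sheet V); split.
- by move=> k; exact: open_sheet.
- by move=> i j; exact: sheets_disjoint.
- exact: preimage_image_bigcup_sheets.
- move=> k; split.
  + by move=> a a'; exact: sheet_injective.
  + exact: image_sheet.
  + by move=> W oW; apply: openP; apply: openI => //; exact: open_sheet.
Qed.

End OrbitProjection.

Lemma right_proper_return_compact (G : discreteTopologicalType)
    (B : topologicalType) (Rt : B -> G -> B) (C : set B) :
  groupoid_right_action_proper Rt -> compact C -> compact (return_set Rt C).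
Proof.
move=> properR cC.
have -> : return_set Rt C = snd @` [set bk | (C `*` C) (bk.1, Rt bk.1 bk.2)].
  apply/seteqP; split => k; first by move=> [b CbCbk]; exists (b, k).
  by move=> [[b k'] /= CbCbk <-]; exists b.
apply: continuous_compact; last exact: properR (compact_setX cC cC).
by apply: continuous_subspaceT => -[? ?]; exact: cvg_snd.
Qed.

Lemma left_proper_return_compact (G : discreteTopologicalType)
    (B : topologicalType) (L : G -> B -> B) (C : set B) :
  groupoid_left_action_proper L -> compact C ->
  compact (return_set (fun b g => L g b) C).
Proof.
move=> properL cC.
have -> : return_set (fun b g => L g b) C =
    fst @` [set gb | (C `*` C) (L gb.1 gb.2, gb.2)].
  apply/seteqP; split => k; first by move=> [b [Cb Ckb]]; exists (k, b).
  by move=> [[k' b] /= [Ckb Cb] <-]; exists b.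
apply: continuous_compact; last exact: properL (compact_setX cC cC).
by apply: continuous_subspaceT => -[? ?]; exact: cvg_fst.
Qed.

Lemma is_group_opposite (G : Type) (mul : G -> G -> G) (one : G) (inv : G -> G) :
  is_group mul one inv -> is_group (fun a c => mul c a) one inv.
Proof. by move=> [mulA mul1g mulg1 mulVg mulgV]; split => // a b c; rewrite mulA. Qed.

Theorem proposition2p2p12
  (R : realType)
  (G1 G2 : discreteTopologicalType)
  (mul1 : G1 -> G1 -> G1) (one1 : G1) (inv1 : G1 -> G1)
  (mul2 : G2 -> G2 -> G2) (one2 : G2) (inv2 : G2 -> G2)
  (X1 X2 B : pseudoMetricType R)
  (act1 : G1 -> X1 -> X1) (act2 : G2 -> X2 -> X2)
  (P1 : B -> X1) (P2 : B -> X2)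
  (L : G1 -> B -> B) (Rt : B -> G2 -> B) :
  is_group mul1 one1 inv1 -> is_group mul2 one2 inv2 ->
  hausdorff_space X1 -> locally_compact [set: X1] ->
  hausdorff_space X2 -> locally_compact [set: X2] ->
  hausdorff_space B -> locally_compact [set: B] ->
  action_by_homeos mul1 one1 act1 -> action_by_homeos mul2 one2 act2 ->
  action_groupoid_equivalence mul1 one1 act1 mul2 one2 inv2 act2 P1 P2 L Rt ->
  covering_map P1 /\ covering_map P2.
Proof.
move=> group1 group2 _ _ _ _ hausB lcB _ _.
move=> [[contP1 openP1 contP2 openP2] [[contL _ LL L1] freeL properL]
        [[contR _ RR R1] freeR properR] [_ P2L P1R] [surjP1 fib1 surjP2 fib2]].
split.
- apply: (orbit_projection_covering group2 RR R1 contR P1R fib1 hausB lcB freeR)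
    => // C.
  exact: right_proper_return_compact.
- (* The left G1-action is a right action of the opposite group. *)
  apply: (orbit_projection_covering (is_group_opposite group1)
    (A := fun b g => L g b) (fun b g g' => LL g' g b) L1 contL
    (fun b g => P2L g b) fib2 hausB lcB (fun b g => freeL g b)) => // C.
  exact: left_proper_return_compact.
Qed.
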